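(* For integers $n\ge1$ and $m\ge n$, let $N=2^{nm}n$ and let $P$ be the set of the first $N$ primes. For each $1\le i\le n$, $1\le j\le m$, choose a random subset $P'_{ij}\subseteq P$ by including each $p\in P$ independently with probability $1/2$ (independently over all $p,i,j$), and set $A_{ij}=\prod_{p\in P'_{ij}}p$. Then: (i) the random $n\times m$ integer matrix $A=(A_{ij})$ is $\tfrac12$-balanced; (ii) for all sufficiently large $n$ (and all $m\ge n$), $|A_{ij}|\le e^{3^{nm}}$ for all $i,j$ almost surely; (iii) $\mathbb{P}(A:\mathbb{Z}^m\to\mathbb{Z}^n\text{ is surjective})\le e^{-n}$, which tends to $0$ as $n\to\infty$.
   Context: A random variable $y$ taking values in $\mathbb{Z}$ is called $\epsilon$-balanced if for every prime $p$ and every residue $r\in\mathbb{Z}/p\mathbb{Z}$ we have $\mathbb{P}(y\equiv r \pmod p)\le 1-\epsilon$. A random matrix is $\epsilon$-balanced if its entries are independent and each entry is $\epsilon$-balanced. *)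

From Stdlib Require Import Reals ZArith ClassicalEpsilon.
From mathcomp Require Import all_boot.
Set Implicit Arguments. Unset Strict Implicit. Unset Printing Implicit Defensive.

(* next_prime p := the least prime q > p; it lies in (p, p`! + 1]
   (any prime divisor of p`! + 1 exceeds p). *)
Definition next_prime (p : nat) : nat :=
  head 0 [seq q <- iota p.+1 (p`!) | prime q].

Fixpoint nth_prime (k : nat) : nat :=
  match k with 0 => 2 | k'.+1 => next_prime (nth_prime k') end.

Definition pdec (P : Prop) : bool :=
  if excluded_middle_informative P then true else false.

Definition Pr (T : finType) (E : T -> Prop) : R :=
  Rdiv (INR #|[set w : T | pdec (E w)]|) (INR #|T|).

Definition balanced (T : finType) (y : T -> nat) (eps : R) : Prop :=
  forall p r : nat, prime p -> Rle (Pr (fun w => y w = r %[mod p])) (Rminus 1 eps).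

Definition entries_independent (T : finType) (n m : nat)
    (A : T -> 'I_n -> 'I_m -> nat) : Prop :=
  forall f : 'I_n -> 'I_m -> nat,
    Pr (fun w => forall i j, A w i j = f i j) =
    \big[Rmult/R1]_(ij : 'I_n * 'I_m) Pr (fun w => A w ij.1 ij.2 = f ij.1 ij.2).

Definition mx_balanced (T : finType) (n m : nat)
    (A : T -> 'I_n -> 'I_m -> nat) (eps : R) : Prop :=
  entries_independent A /\ forall i j, balanced (fun w => A w i j) eps.

Definition bigN (n m : nat) : nat := 2 ^ (n * m) * n.

(* sample space: for each (i,j), a subset P'_ij of the first N primes,
   indexed by 'I_N; uniform measure = each prime included independently
   with probability 1/2, independently over all p, i, j. *)
Notation Omega n m := {ffun 'I_n * 'I_m -> {set 'I_(bigN n m)}}.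

Definition Aent (n m : nat) (w : Omega n m) (i : 'I_n) (j : 'I_m) : nat :=
  \prod_(k in w (i, j)) nth_prime k.

Definition int_surjective (n m : nat) (A : 'I_n -> 'I_m -> nat) : Prop :=
  forall y : 'I_n -> Z, exists x : 'I_m -> Z,
    forall i, \big[Z.add/0%Z]_(j < m) (Z.of_nat (A i j) * x j)%Z = y i.

From HB Require Import structures.
From Stdlib Require Import Reals ZArith Lia Lra ClassicalEpsilon.
From mathcomp Require Import all_boot zify.
Set Implicit Arguments. Unset Strict Implicit. Unset Printing Implicit Defensive.

(* (i) Fix a prime p and let q be p if p is among the first N primes, and 2
   otherwise.  Toggling q in a subset is an involution, and a subset and its
   toggle never have products with the same residue mod p: otherwise p would
   divide the product of the remaining primes.  Hence every residue class has
   probability at most 1/2; independence holds because the sample space is a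
   product.
   (ii) C(2M, M) >= 2^M is a product of prime powers each at most 2M, so it has
   more than N prime factors once (2M)^N < 2^M; then the N-th prime is at most
   2M.  With M = 4^(nm) every entry is at most (2M)^N = 2^((2nm+1)N), and this
   is at most 2^(3^(nm)) for nm >= 16.
   (iii) If A is surjective, the first row has no common prime factor, so each
   of the N primes is missing from some entry of that row.  For one prime this
   has probability 1 - 2^-m, independently over the primes, hence
   P(surjective) <= (1 - 2^-m)^N <= exp(-N 2^-m) <= exp(-n). *)

Lemma RmultA : associative Rmult.
Proof. by move=> x y z; rewrite Rmult_assoc. Qed.

HB.instance Definition _ :=
  Monoid.isComLaw.Build R R1 Rmult RmultA Rmult_comm Rmult_1_l.

Lemma big_const_Rmult (I : finType) (c : R) :
  \big[Rmult/R1]_(i : I) c = pow c #|I|.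
Proof. by rewrite big_const; elim: #|I| => //= k ->. Qed.

Lemma INR_expn (m k : nat) : INR (m ^ k) = pow (INR m) k.
Proof. by elim: k => //= k IH; rewrite expnS mult_INR IH. Qed.

Lemma pdecP (P : Prop) : reflect P (pdec P).
Proof. by rewrite /pdec; case: excluded_middle_informative; constructor. Qed.

Section UniformProbability.
Variable T : finType.

Lemma PrE (E : T -> Prop) (A : {pred T}) :
  (forall w, E w <-> w \in A) -> Pr E = Rdiv (INR #|A|) (INR #|T|).
Proof.
move=> EA; rewrite /Pr; congr (Rdiv (INR _) _); apply: eq_card => w.
by rewrite inE; apply/idP/idP => [/pdecP/EA | /EA/pdecP].
Qed.

Lemma le_Pr (E F : T -> Prop) : (forall w, E w -> F w) -> Rle (Pr E) (Pr F).
Proof.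
move=> EF; rewrite /Pr /Rdiv.
have [->|T_gt0] := posnP #|T|; first by rewrite Rinv_0 !Rmult_0_r; apply: Rle_refl.
apply: Rmult_le_compat_r; first by apply/Rlt_le/Rinv_0_lt_compat/lt_0_INR/ltP.
apply/le_INR/leP/subset_leq_card/subsetP => w; rewrite !inE.
by move/pdecP/EF/pdecP.
Qed.

Lemma Pr_certain (E : T -> Prop) : 0 < #|T| -> (forall w, E w) -> Pr E = R1.
Proof.
move=> T_gt0 allE; rewrite (@PrE _ T) //.
by apply: Rinv_r; apply: not_0_INR; apply/eqP; rewrite -lt0n.
Qed.

End UniformProbability.

Lemma Pr_bij (T1 T2 : finType) (f : T1 -> T2) (E1 : T1 -> Prop) (E2 : T2 -> Prop) :
  bijective f -> (forall w, E1 w <-> E2 (f w)) -> Pr E1 = Pr E2.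
Proof.
move=> [g fK gK] E12; rewrite /Pr (bij_eq_card (f := f)); last by exists g.
rewrite -(card_imset _ (can_inj fK)); congr (Rdiv (INR _) _).
apply: eq_card => v; rewrite [in RHS]inE; apply/imsetP/idP.
  by case=> w; rewrite inE => /pdecP/E12 Ew ->; apply/pdecP.
move=> /pdecP Ev; exists (g v); last by rewrite gK.
by rewrite inE; apply/pdecP/E12; rewrite gK.
Qed.

Section ProductSpace.
Variables (aT rT : finType).
Hypothesis rT_gt0 : 0 < #|rT|.

Lemma Pr_family (F : aT -> pred rT) (E : {ffun aT -> rT} -> Prop) :
  (forall w, E w <-> forall x, w x \in F x) ->
  Pr E = \big[Rmult/R1]_(x : aT) Rdiv (INR #|F x|) (INR #|rT|).
Proof.
move=> EF; rewrite (@PrE _ _ (family F)); last first.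
  by move=> w; rewrite EF; apply: rwP familyP.
rewrite card_family foldrE big_map big_enum card_ffun INR_expn /Rdiv big_split /=.
rewrite big_const_Rmult pow_inv; congr Rmult.
by apply: (big_morph INR) => // x y; rewrite mult_INR.
Qed.

Lemma Pr_coord (x0 : aT) (B : {pred rT}) (E : {ffun aT -> rT} -> Prop) :
  (forall w, E w <-> w x0 \in B) -> Pr E = Rdiv (INR #|B|) (INR #|rT|).
Proof.
move=> EB.
rewrite (@Pr_family (fun x => if x == x0 then [pred y | y \in B] else predT)); last first.
  move=> w; rewrite EB; split=> [Bw x | /(_ x0)]; last by rewrite eqxx.
  by case: eqP => [->|].
rewrite (bigD1 x0) //= eqxx big1 ?Rmult_1_r // => x /negbTE ->.
by apply: Rinv_r; apply: not_0_INR; rewrite (_ : #|predT| = #|rT|) //; lia.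
Qed.

End ProductSpace.

Lemma prime_in_fact_range p : exists2 q, prime q & p < q <= p`!.+1.
Proof.
have fact_gt1 : 1 < p`!.+1 by rewrite ltnS fact_gt0.
have d_pr := pdiv_prime fact_gt1.
exists (pdiv p`!.+1) => //; rewrite pdiv_leq // andbT ltnNge.
apply/negP => /(conj (prime_gt0 d_pr))/andP/dvdn_fact d_fact.
have : pdiv p`!.+1 %| p`! + 1 by rewrite addn1 pdiv_dvd.
by rewrite (dvdn_addr 1 d_fact) dvdn1 => /eqP d1; rewrite d1 in d_pr.
Qed.

Lemma next_primeP p : 0 < p ->
  [/\ prime (next_prime p), p < next_prime p &
      forall q, prime q -> p < q -> next_prime p <= q].
Proof.
move=> p_gt0; rewrite /next_prime; set s := [seq q <- _ | _].
have s_sorted : sorted ltn s.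
  by apply: sorted_filter; [exact: ltn_trans | exact: iota_ltn_sorted].
have mem_s q : (q \in s) = prime q && (p < q <= p + p`!).
  by rewrite mem_filter mem_iota; congr (_ && _); lia.
have [q0 q0_pr /andP[p_q0 q0_le]] := prime_in_fact_range p.
have : q0 \in s by rewrite mem_s q0_pr /=; lia.
case: s mem_s s_sorted => [//|q t] mem_s /= q_t _.
have /andP[q_pr /andP[p_q q_le]] : prime q && (p < q <= p + p`!).
  by rewrite -mem_s mem_head.
split=> // q' q'_pr p_q'; rewrite leqNgt; apply/negP => q'_q.
have : q' \in q :: t by rewrite mem_s q'_pr /=; lia.
rewrite inE => /predU1P[q'E|]; first by lia.
by move/(allP (order_path_min ltn_trans q_t)); lia.
Qed.

Lemma nth_prime_prime k : prime (nth_prime k).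
Proof. by elim: k => //= k IH; case: (next_primeP (prime_gt0 IH)). Qed.

Lemma nth_prime_ltS k : nth_prime k < nth_prime k.+1.
Proof. by case: (next_primeP (prime_gt0 (nth_prime_prime k))). Qed.

Lemma nth_prime_lt : {homo nth_prime : j k / j < k}.
Proof. exact: homo_ltn ltn_trans nth_prime_ltS. Qed.

Lemma nth_prime_inj : injective nth_prime.
Proof. exact/incn_inj/leq_mono/nth_prime_lt. Qed.

Lemma prime_lt_nth_prime k q :
  prime q -> q < nth_prime k -> exists2 j, j < k & q = nth_prime j.
Proof.
elim: k => [|k IH] q_pr q_lt; first by move: q_lt; rewrite ltnNge prime_gt1.
have [q_k|q_k|->] := ltngtP q (nth_prime k); last by exists k.
  by have [j j_k ->] := IH q_pr q_k; exists j => //; apply: ltnW.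
have [_ _ /(_ q q_pr q_k)] := next_primeP (prime_gt0 (nth_prime_prime k)).
by move: q_lt => /= /[swap]; lia.
Qed.

(** * A Chebyshev-type bound on the N-th prime *)

Lemma expn2_le_binom M : 2 ^ M <= 'C(2 * M, M).
Proof.
elim: M => [//|M IH]; rewrite (_ : 2 * M.+1 = (2 * M).+2) ?binS; last by lia.
have : 'C(2 * M, M) <= 'C((2 * M).+1, M.+1) by rewrite binS leq_addl.
have : 'C(2 * M, M) <= 'C((2 * M).+1, M).
  by case: M {IH} => [//|M]; rewrite binS leq_addr.
by rewrite expnS; lia.
Qed.

Lemma logn_fact_wide p n K : prime p -> n <= K ->
  logn p n`! = \sum_(1 <= k < K.+1) n %/ p ^ k.
Proof.
move=> p_pr n_K; rewrite logn_fact // [RHS](@big_cat_nat _ _ _ n.+1) //=.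
rewrite [X in _ + X]big_nat_cond [X in _ + X]big1 ?addn0 // => k /andP[/andP[n_k _] _].
by apply: divn_small; have := ltn_expl k (prime_gt1 p_pr); lia.
Qed.

Lemma leq_divn_double n q : 0 < q -> (2 * n) %/ q <= 2 * (n %/ q) + (q <= 2 * n).
Proof.
move=> q_gt0; case: (leqP q (2 * n)) => [_|lt_2n_q]; last by rewrite divn_small.
rewrite addn1 -ltnS ltn_divLR //.
have := divn_eq n q; have := ltn_pmod n q_gt0.
by move: (n %/ q) (n %% q) => a b; nia.
Qed.

Lemma sum_leq_indicator K L : \sum_(1 <= k < K) (k <= L) <= minn K.-1 L.
Proof.
elim: K => [|[|K] IH]; try by rewrite big_geq.
by rewrite big_nat_recr //=; case: (leqP K.+1 L) => /=; lia.
Qed.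

Lemma pfactor_binom_le p M : prime p -> 0 < M -> p ^ logn p 'C(2 * M, M) <= 2 * M.
Proof.
move=> p_pr M_gt0; have p_gt1 := prime_gt1 p_pr.
set L := trunc_log p (2 * M).
apply: leq_trans (trunc_logP p_gt1 _); last by lia.
rewrite leq_pexp2l ?prime_gt0 //.
have C_gt0 : 0 < 'C(2 * M, M) by rewrite bin_gt0; lia.
have : logn p (2 * M)`! = logn p 'C(2 * M, M) + (logn p M`! + logn p M`!).
  have := @bin_fact (2 * M) M; rewrite (_ : 2 * M - M = M); last by lia.
  by move=> <-; [rewrite !lognM ?muln_gt0 ?fact_gt0 | lia].
rewrite !(@logn_fact_wide p _ (2 * M)) //; try lia.
have : \sum_(1 <= k < (2 * M).+1) (2 * M) %/ p ^ k <=
       \sum_(1 <= k < (2 * M).+1) (2 * (M %/ p ^ k) + (k <= L)).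
  apply: leq_sum => k _; have pk_gt0 : 0 < p ^ k by rewrite expn_gt0 prime_gt0.
  apply: leq_trans (leq_divn_double M pk_gt0) _; rewrite leq_add2l.
  by case: (leqP (p ^ k) (2 * M)) => // /(trunc_log_max p_gt1) ->.
rewrite big_split /= -big_distrr /=.
by have := sum_leq_indicator (2 * M).+1 L; lia.
Qed.

Lemma nth_prime_le N M : 0 < M -> (2 * M) ^ N < 2 ^ M -> nth_prime N <= 2 * M.
Proof.
move=> M_gt0 small_N; rewrite leqNgt; apply/negP => big_pN.
set C := 'C(2 * M, M).
have C_gt0 : 0 < C by rewrite bin_gt0; lia.
have pfactor_le p : p \in primes C -> p ^ logn p C <= 2 * M.
  by rewrite mem_primes => /andP[p_pr _]; apply: pfactor_binom_le.
have size_le : size (primes C) <= N.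
  rewrite -[N](size_iota 0) -(size_map nth_prime (iota 0 N)).
  apply: uniq_leq_size => [|p p_C]; first exact: primes_uniq.
  have p_pr : prime p by move: p_C; rewrite mem_primes => /andP[].
  have p_le : p <= 2 * M.
    apply: leq_trans (pfactor_le p p_C).
    move: p_C; rewrite -logn_gt0 => log_gt0.
    by rewrite -{1}(expn1 p) (leq_pexp2l (prime_gt0 p_pr)).
  have [j j_N ->] := prime_lt_nth_prime p_pr (leq_ltn_trans p_le big_pN).
  by rewrite map_f // mem_iota.
have : C <= (2 * M) ^ size (primes C).
  rewrite {1}(prod_prime_decomp C_gt0) prime_decompE big_map /= big_seq.
  apply: leq_trans (leq_prod (E2 := fun=> 2 * M) pfactor_le) _.
  by rewrite -big_seq big_const_seq count_predT iter_muln_1.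
have : (2 * M) ^ size (primes C) <= (2 * M) ^ N by rewrite leq_pexp2l //; lia.
by have := expn2_le_binom M; rewrite -/C; lia.
Qed.

(** * Balancedness *)

Lemma double_card_le_of_inj_out (T : finType) (f : T -> T) (C : {set T}) :
  injective f -> {in C, forall x, f x \notin C} -> 2 * #|C| <= #|T|.
Proof.
move=> f_inj f_out; have : f @: C \subset ~: C.
  by apply/subsetP => _ /imsetP[x xC ->]; rewrite inE f_out.
by move/subset_leq_card; rewrite card_imset // -(cardsC C); lia.
Qed.

Lemma prime_dvd_mul_mod p q x r : prime p -> q = p \/ q = 2 ->
  x = r %[mod p] -> q * x = r %[mod p] -> p %| x.
Proof.
move=> p_pr [->|->] x_r qx_r; first by rewrite /dvdn x_r -qx_r modnMr.
have : 2 * x == x %[mod p] by rewrite x_r qx_r.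
by rewrite eqn_mod_dvd ?leq_pmull // (_ : 2 * x - x = x) //; lia.
Qed.

Lemma prime_dvd_prod_nth_prime N (U : {set 'I_N}) p : prime p ->
  p %| \prod_(k in U) nth_prime k -> exists2 k, k \in U & p = nth_prime k.
Proof.
move=> p_pr; rewrite Euclid_dvd_prod // big_orE => /existsP[k /andP[kU]].
by rewrite dvdn_prime2 ?nth_prime_prime // => /eqP p_k; exists k.
Qed.

Lemma card_residue_le_half N p r : 0 < N -> prime p ->
  2 * #|[set S : {set 'I_N} | \prod_(k in S) nth_prime k == r %[mod p]]|
    <= #|{set 'I_N}|.
Proof.
move=> N_gt0 p_pr.
have [k0 [q_k0 other_k]] : exists k0 : 'I_N, (nth_prime k0 = p \/ nth_prime k0 = 2)
    /\ forall k, k != k0 -> nth_prime k != p.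
  case: (pickP (fun k : 'I_N => nth_prime k == p)) => [k /eqP pk | none].
    exists k; split; first by left.
    by move=> k' k'_k; rewrite -pk; apply: contra_neq k'_k => /nth_prime_inj/val_inj.
  by exists (Ordinal N_gt0); split=> [|k _]; [right | rewrite none].
pose toggle (S : {set 'I_N}) := if k0 \in S then S :\ k0 else k0 |: S.
have toggleK : involutive toggle.
  move=> S; rewrite /toggle; have [k0S|k0S] /= := boolP (k0 \in S).
    by rewrite setD11 setD1K.
  by rewrite setU11 setU1K.
have not_both (U : {set 'I_N}) : k0 \notin U -> \prod_(k in U) nth_prime k = r %[mod p] ->
    \prod_(k in k0 |: U) nth_prime k = r %[mod p] -> False.
  move=> k0U U_r; rewrite big_setU1 //= => k0U_r.
  have := prime_dvd_mul_mod p_pr q_k0 U_r k0U_r.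
  move=> /(prime_dvd_prod_nth_prime p_pr)[k kU p_k].
  have k_k0 : k != k0 by apply: contraNneq k0U => <-.
  by move: (other_k k k_k0); rewrite p_k eqxx.
apply: double_card_le_of_inj_out (inv_inj toggleK) _ => S; rewrite !inE /toggle.
case: ifP => k0S /eqP S_r; apply/negP => /eqP tS_r.
  by apply: (not_both (S :\ k0)); rewrite ?setD11 ?setD1K.
exact: (not_both S (negbT k0S)).
Qed.

Lemma card_set_gt0 (T : finType) : 0 < #|{set T}|.
Proof. by apply/card_gt0P; exists set0. Qed.

Lemma Aent_independent n m : entries_independent (@Aent n m).
Proof.
move=> f; pose B x :=
  [pred S : {set 'I_(bigN n m)} | \prod_(k in S) nth_prime k == f x.1 x.2].
rewrite (Pr_family (F := B)); last first.
  by move=> w; split=> [Af [i j] | Bw i j]; [rewrite inE /= -Af | exact/eqP/(Bw (i, j))].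
apply: eq_bigr => x _; apply/esym/(Pr_coord (card_set_gt0 _) (x0 := x)) => w.
by rewrite inE /Aent -surjective_pairing; split=> /eqP.
Qed.

Lemma Aent_balanced n m i j : 0 < n -> balanced (fun w : Omega n m => Aent w i j) (/ 2).
Proof.
move=> n_gt0 p r p_pr.
set C := [set S : {set 'I_(bigN n m)} | \prod_(k in S) nth_prime k == r %[mod p]].
rewrite (Pr_coord (card_set_gt0 _) (x0 := (i, j)) (B := C)); last first.
  by move=> w; rewrite inE /Aent; split=> /eqP.
have N_gt0 : 0 < bigN n m by rewrite muln_gt0 expn_gt0.
have /le_INR := leP (card_residue_le_half r N_gt0 p_pr); rewrite -/C mult_INR.
have := lt_0_INR _ (ltP (card_set_gt0 'I_(bigN n m))).
move: (INR #|C|) (INR #|{set _}|) => c t t_gt0 ct.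
simpl in ct; apply: (Rmult_le_reg_r t) => //; rewrite /Rdiv Rmult_assoc Rinv_l; lra.
Qed.

(** * Size of the entries *)

Lemma expn2_le_exp K : Rle (INR (2 ^ K)) (exp (INR K)).
Proof.
elim: K => [|K IH]; first by rewrite exp_0; apply: Rle_refl.
rewrite expnS mult_INR (S_INR K) exp_plus Rmult_comm.
have : Rle 2 (exp 1) by have := exp_ineq1_le 1; lra.
by apply: Rmult_le_compat => //=; [apply: pos_INR | lra].
Qed.

Lemma poly_lt_expn2 t : 16 <= t -> (2 * t + 1) * t < 2 ^ t.
Proof.
elim: t => [//|t IH]; rewrite leq_eqVlt => /predU1P[<- //|t_ge16].
by have := IH t_ge16; rewrite expnS; nia.
Qed.

Lemma poly_expn2_le_expn3 t : 16 <= t -> (2 * t + 1) * t * 2 ^ t <= 3 ^ t.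
Proof.
elim: t => [//|t IH]; rewrite leq_eqVlt => /predU1P[<-|t_ge16].
  by rewrite !expnS expn0; lia.
have := IH t_ge16; rewrite !expnS; move: (2 ^ t) (3 ^ t) => a b.
have : 2 * ((2 * t.+1 + 1) * t.+1) <= 3 * ((2 * t + 1) * t) by nia.
by nia.
Qed.

Lemma Aent_le n m (w : Omega n m) i j :
  4 <= n -> n <= m -> Aent w i j <= 2 ^ (3 ^ (n * m)).
Proof.
move=> n_ge4 n_m; set t := n * m.
have t_ge16 : 16 <= t by rewrite /t; nia.
have n_t : n <= t by rewrite /t; nia.
set M := 2 ^ (2 * t).
have twoM : 2 * M = 2 ^ (2 * t + 1) by rewrite addn1 expnS.
have N_le : (2 * t + 1) * bigN n m < M.
  have : (2 * t + 1) * n < 2 ^ t.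
    by apply: leq_ltn_trans (poly_lt_expn2 t_ge16); rewrite leq_mul2l n_t orbT.
  rewrite /bigN /M mul2n -addnn expnD.
  by have := expn_gt0 2 t; move: (2 ^ t) => X; nia.
have pN_le : nth_prime (bigN n m) <= 2 * M.
  by apply: nth_prime_le; rewrite ?expn_gt0 // twoM -expnM ltn_exp2l.
have : Aent w i j <= (2 * M) ^ bigN n m.
  apply: leq_trans (_ : \prod_(k in w (i, j)) (2 * M) <= _).
    by apply: leq_prod => k _; apply: leq_trans pN_le; apply/ltnW/nth_prime_lt.
  rewrite prod_nat_const leq_pexp2l ?muln_gt0 ?expn_gt0 //.
  by apply: leq_trans (max_card _) _; rewrite card_ord.
move/leq_trans; apply; rewrite twoM -expnM leq_exp2l //.
apply: leq_trans (poly_expn2_le_expn3 t_ge16); rewrite /bigN.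
by move: (2 ^ t) => X; nia.
Qed.

(** * Surjectivity *)

Lemma int_surjective_row_not_dvd n m (A : 'I_n -> 'I_m -> nat) (i0 : 'I_n) p :
  1 < p -> int_surjective A -> ~ (forall j, p %| A i0 j).
Proof.
move=> p_gt1 A_surj p_row.
have [x Ax] := A_surj (fun i => if i == i0 then 1%Z else 0%Z).
have : (Z.of_nat p | \big[Z.add/0%Z]_(j < m) (Z.of_nat (A i0 j) * x j))%Z.
  apply: (big_ind (fun z => Z.divide (Z.of_nat p) z)) => [|a b|j _].
  - exact: Z.divide_0_r.
  - exact: Z.divide_add_r.
  - apply/Z.divide_mul_l; have /dvdnP[c ->] := p_row j; rewrite Nat2Z.inj_mul.
    exact/Z.divide_mul_r/Z.divide_refl.
by rewrite Ax eqxx => /(Z.divide_pos_le _ _ Z.lt_0_1); lia.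
Qed.

Lemma dvdn_Aent n m (w : Omega n m) i j k : k \in w (i, j) -> nth_prime k %| Aent w i j.
Proof. by move=> kw; rewrite /Aent (big_setD1 k kw) dvdn_mulr. Qed.

Lemma int_surjective_Aent_row n m (i0 : 'I_n) (w : Omega n m) :
  int_surjective (Aent w) -> forall k, [exists j, k \notin w (i0, j)].
Proof.
move=> w_surj k; case: (boolP [exists j, _]) => // /existsPn k_row; exfalso.
apply: (int_surjective_row_not_dvd (prime_gt1 (nth_prime_prime k)) w_surj) => j.
by apply: (dvdn_Aent (i := i0)); move: (k_row j); rewrite negbK.
Qed.

Lemma card_ffun_all_true (T : finType) (A : {pred T}) :
  #|[pred h : {ffun T -> bool} | [forall x in A, h x]]| * 2 ^ #|A| = 2 ^ #|T|.
Proof.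
set F := fun x => if x \in A then pred1 true else predT.
rewrite (eq_card (B := family F)); last first.
  move=> h; rewrite inE; apply/forall_inP/familyP => [hA x | hA x xA].
    by rewrite /F; case: ifP => xA; rewrite ?inE ?hA.
  by have := hA x; rewrite /F xA inE => /eqP.
rewrite card_family foldrE big_map big_enum /=.
rewrite (eq_bigr (fun x => if x \in [predC A] then 2 else 1)); last first.
  by move=> x _; rewrite /F inE; case: (x \in A); rewrite ?card1 ?card_bool.
by rewrite -big_mkcond prod_nat_const -expnD addnC cardC.
Qed.

Lemma Pr_not_all_true (T : finType) (A : {pred T}) :
  Pr (fun h : {ffun T -> bool} => ~~ [forall x in A, h x]) =
  Rminus 1 (Rinv (INR (2 ^ #|A|))).
Proof.
set C := [pred h : {ffun T -> bool} | [forall x in A, h x]].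
rewrite (PrE (A := [predC C])) => [|h]; last by rewrite !inE.
have := card_ffun_all_true A; have := cardC C; rewrite card_ffun card_bool.
move=> /(f_equal INR) + /(f_equal INR); rewrite plus_INR mult_INR.
have := lt_0_INR _ (ltP (expn_gt0 2 #|A|)); have := lt_0_INR _ (ltP (expn_gt0 2 #|T|)).
move: (INR #|C|) (INR #|[predC C]|) (INR (2 ^ #|A|)) (INR (2 ^ #|T|)).
move=> c b X N N_gt0 X_gt0 cbN cXN.
have -> : b = Rminus N c by lra.
rewrite -cXN; field; split; [lra | nra].
Qed.

Lemma Pr_Aent_row_avoids n m (i0 : 'I_n) :
  Pr (fun w : Omega n m => forall k, [exists j, k \notin w (i0, j)]) =
  pow (1 - / INR (2 ^ m)) (bigN n m).
Proof.
set row := [pred x : 'I_n * 'I_m | x.1 == i0].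
set B := [pred h : {ffun 'I_n * 'I_m -> bool} | ~~ [forall x in row, h x]].
(* Transposition turns the event into a product over the N primes. *)
pose tr (w : Omega n m) : {ffun 'I_(bigN n m) -> {ffun 'I_n * 'I_m -> bool}} :=
  [ffun k => [ffun x => k \in w x]].
have tr_bij : bijective tr.
  exists (fun g : {ffun 'I_(bigN n m) -> {ffun 'I_n * 'I_m -> bool}} =>
    [ffun x : 'I_n * 'I_m => [set k : 'I_(bigN n m) | g k x]]) => [w | g].
    by apply/ffunP => x; apply/setP => k; rewrite ffunE inE !ffunE.
  by apply/ffunP => k; apply/ffunP => y; rewrite !ffunE inE.
have row_avoids (w : Omega n m) k : [exists j, k \notin w (i0, j)] = (tr w k \in B).
  rewrite inE negb_forall; apply/existsP/existsP => [[j kw] | [[i j]]].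
    by exists (i0, j); rewrite !ffunE /row inE eqxx.
  by rewrite !ffunE negb_imply => /andP[/eqP /= -> kw]; exists j.
rewrite (Pr_bij (E2 := fun g : {ffun 'I_(bigN n m) -> {ffun 'I_n * 'I_m -> bool}} =>
  forall k, g k \in B) tr_bij); last first.
  by move=> w; split=> avoid k; [rewrite -row_avoids | rewrite row_avoids].
rewrite (Pr_family (F := fun=> B)) // big_const_Rmult card_ord; congr pow.
have card_row : #|row| = m.
  transitivity #|setX [set i0] [set: 'I_m]|.
    by apply: eq_card => -[i j]; rewrite !inE andbT.
  by rewrite cardsX cards1 cardsT card_ord mul1n.
rewrite -(@PrE _ (fun h : {ffun 'I_n * 'I_m -> bool} => ~~ [forall x in row, h x]) B);
  last by move=> h; rewrite inE.
by rewrite Pr_not_all_true card_row.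
Qed.

Lemma pow_one_sub_le_exp (y : R) (N : nat) :
  Rle 0 (1 - y) -> Rle (pow (1 - y) N) (exp (- (y * INR N))).
Proof.
move=> y_le1; elim: N => [|N IH].
  by rewrite Rmult_0_r Ropp_0 exp_0; apply: Rle_refl.
rewrite S_INR Rmult_plus_distr_l Rmult_1_r Ropp_plus_distr exp_plus /= Rmult_comm.
apply: Rmult_le_compat => //; first exact: pow_le.
by have := exp_ineq1_le (- y); lra.
Qed.

Lemma Pr_Aent_surjective_le n m : 0 < n ->
  Rle (Pr (fun w : Omega n m => int_surjective (Aent w))) (exp (- INR n)).
Proof.
move=> n_gt0; apply: Rle_trans (le_Pr (int_surjective_Aent_row (Ordinal n_gt0))) _.
rewrite Pr_Aent_row_avoids.
have X_ge1 : Rle 1 (INR (2 ^ m)) by apply: (le_INR 1); apply/leP; rewrite expn_gt0.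
apply: Rle_trans (pow_one_sub_le_exp _ _) _.
  by have := Rinv_le_contravar _ _ Rlt_0_1 X_ge1; rewrite Rinv_1; lra.
have N_ge : (2 ^ m * n <= bigN n m)%N by rewrite leq_mul2r leq_exp2l //; nia.
move/leP/le_INR: N_ge; rewrite mult_INR; have := pos_INR n.
move: (INR (2 ^ m)) (INR n) (INR (bigN n m)) X_ge1 => X x N X_ge1 x_ge0 N_ge.
have : Rle x (/ X * N).
  apply: (Rmult_le_reg_l X); first lra.
  rewrite -Rmult_assoc Rinv_r; lra.
move=> /Ropp_le_contravar/Rle_lt_or_eq_dec[/exp_increasing/Rlt_le // | ->].
exact: Rle_refl.
Qed.

Theorem mainTheorem5 :
  (forall n m : nat, 1 <= n -> n <= m ->
     mx_balanced (@Aent n m) (Rinv 2)) /\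
  (exists n0 : nat, forall n m : nat, 1 <= n -> n0 <= n -> n <= m ->
     Pr (fun w : Omega n m => forall i j,
           Rle (INR (Aent w i j)) (exp (INR (3 ^ (n * m))))) = R1) /\
  (forall n m : nat, 1 <= n -> n <= m ->
     Rle (Pr (fun w : Omega n m => int_surjective (Aent w))) (exp (Ropp (INR n)))).
Proof.
split; [|split].
- move=> n m n_gt0 _; split; first exact: Aent_independent.
  by move=> i j; apply: Aent_balanced.
- exists 4 => n m _ n_ge4 n_m; apply: Pr_certain => [|w i j].
    by apply/card_gt0P; exists [ffun=> set0].
  apply: Rle_trans (expn2_le_exp _); apply/le_INR/leP.
  exact: Aent_le.
- by move=> n m n_gt0 _; apply: Pr_Aent_surjective_le.
Qed.
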